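(* The category of filtered complexes over a field $\mathbb F$ is a Krull–Schmidt category. Moreover, a filtered complex is an indecomposable object of this category if and only if it is basic.
   Context: Fix a field $\mathbb F$; all vector spaces are finite-dimensional over $\mathbb F$. A complex is a family $(V_n,\partial_n)_{n\in\mathbb Z}$ of finite-dimensional vector spaces and linear maps $\partial_n:V_n\to V_{n-1}$ with $\partial_{n-1}\circ\partial_n=0$, such that all but finitely many $\partial_n$ are isomorphisms (equivalently, only finitely many $V_n$ are nonzero); morphisms of complexes are chain maps. A filtered complex is a family of complexes $({}_pV_\bullet)_{p\in\mathbb Z}$ in which each ${}_pV_\bullet$ is a subcomplex of ${}_{p+1}V_\bullet$, such that ${}_pV_\bullet=0$ for all sufficiently small $p$ and ${}_pV_\bullet={}_{p+1}V_\bullet$ for all but finitely many $p$; its colimit $V_\bullet$ is ${}_pV_\bullet$ for $p$ sufficiently large. A morphism of filtered complexes $({}_pV_\bullet)\to({}_pW_\bullet)$ is a family of chain maps ${}_pV_\bullet\to{}_pW_\bullet$ commuting with the inclusions; direct sums are formed levelwise. For $n\in\mathbb Z$, $J[n]$ denotes the complex with $\mathbb F$ in degree $n$ and $0$ elsewhere, and $K[n]$ the complex with $\mathbb F$ in degrees $n$ and $n+1$, $\partial_{n+1}=\mathrm{id}_{\mathbb F}$, and $0$ elsewhere. A filtered complex is basic if its colimit is isomorphic to $J[n]$ or to $K[n]$ for some $n$. An object of an additive category is indecomposable if it is nonzero and not isomorphic to a direct sum of two nonzero objects. A ring is local if $1\neq 0$ and for every element $f$, if $f$ is not invertible then $1-f$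 is invertible. An additive category is Krull–Schmidt if every object is isomorphic to a finite direct sum of indecomposable objects and every indecomposable object has a local endomorphism ring. *)

(* Finite-dimensional F-vector spaces are modelled as F^d
   (row vectors), linear maps as matrices acting on the right (v *m A),
   subspaces as row spaces of matrices (mxalgebra, scope %MS). *)
From HB Require Import structures.
From mathcomp Require Import all_boot all_order all_algebra.
Set Implicit Arguments. Unset Strict Implicit. Unset Printing Implicit Defensive.
Import GRing.Theory Num.Theory.
Local Open Scope ring_scope.

Section Defs.
Variable F : fieldType.

Record cplx := Cplx {
  cdim : int -> nat;
  cdif : forall n : int, 'M[F]_(cdim n, cdim (n - 1)) }.

Definition is_cplx (C : cplx) : Prop :=
  (forall n : int, cdif C n *m cdif C (n - 1) = 0) /\
  (exists N : nat, forall n : int, (N%:Z < `|n|) -> cdim C n = 0%N).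

Definition chain_map (C D : cplx) (f : forall n : int, 'M[F]_(cdim C n, cdim D n)) :=
  forall n : int, cdif C n *m f (n - 1) = f n *m cdif D n.

Definition ciso (C D : cplx) : Prop :=
  exists (f : forall n : int, 'M[F]_(cdim C n, cdim D n))
         (g : forall n : int, 'M[F]_(cdim D n, cdim C n)),
    [/\ chain_map f, chain_map g,
        forall n, f n *m g n = 1%:M & forall n, g n *m f n = 1%:M].

Definition cJ (n : int) : cplx :=
  @Cplx (fun m : int => if m == n then 1%N else 0%N) (fun m => 0).
(* the only index m with both dims nonzero is m = n+1, where the map is id_F *)
Definition cK (n : int) : cplx :=
  @Cplx (fun m : int => if (m == n) || (m == n + 1) then 1%N else 0%N)
       (fun m => const_mx 1).

Definition czero : cplx := @Cplx (fun _ => 0%N) (fun _ => 0).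

Definition cdsum (C D : cplx) : cplx :=
  @Cplx (fun n => (cdim C n + cdim D n)%N)
       (fun n => block_mx (cdif C n) 0 0 (cdif D n)).

(* A filtered complex is given by its colimit complex fcol together with the
   subspaces ffil p n = (pV)_n of V_n (as row spaces). *)
Record fcplx := FCplx {
  fcol : cplx;
  ffil : int -> forall n : int, 'M[F]_(cdim fcol n) }.

Definition is_fcplx (V : fcplx) : Prop :=
  [/\ is_cplx (fcol V),
      forall p n : int, (ffil V p n *m cdif (fcol V) n <= ffil V p (n - 1))%MS,
      forall p n : int, (ffil V p n <= ffil V (p + 1) n)%MS &
      exists P : nat, forall p n : int,
        (p <= - P%:Z -> ffil V p n = 0) /\
        (P%:Z <= p -> (1%:M <= ffil V p n)%MS)].

Definition fmorph (V W : fcplx)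
  (f : forall n : int, 'M[F]_(cdim (fcol V) n, cdim (fcol W) n)) : Prop :=
  chain_map f /\ forall p n : int, (ffil V p n *m f n <= ffil W p n)%MS.

Definition fiso (V W : fcplx) : Prop :=
  exists (f : forall n : int, 'M[F]_(cdim (fcol V) n, cdim (fcol W) n))
         (g : forall n : int, 'M[F]_(cdim (fcol W) n, cdim (fcol V) n)),
    [/\ fmorph f, fmorph g,
        forall n, f n *m g n = 1%:M & forall n, g n *m f n = 1%:M].

Definition fzero : fcplx := @FCplx czero (fun _ _ => 0).

Definition fdsum (V W : fcplx) : fcplx :=
  @FCplx (cdsum (fcol V) (fcol W))
        (fun p n => block_mx (ffil V p n) 0 0 (ffil W p n)).

Definition fdsum_seq (s : seq fcplx) : fcplx := foldr fdsum fzero s.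

Definition nonzero_obj (V : fcplx) : Prop := ~ fiso V fzero.

Definition indecomposable (V : fcplx) : Prop :=
  nonzero_obj V /\
  forall A B : fcplx, is_fcplx A -> is_fcplx B ->
    nonzero_obj A -> nonzero_obj B -> ~ fiso V (fdsum A B).

(* End(V): endomorphisms, with + pointwise and product = composition. *)
Definition end_invertible (V : fcplx)
  (f : forall n : int, 'M[F]_(cdim (fcol V) n)) : Prop :=
  exists g : forall n : int, 'M[F]_(cdim (fcol V) n),
    fmorph g /\ forall n, g n *m f n = 1%:M /\ f n *m g n = 1%:M.

Definition local_end (V : fcplx) : Prop :=
  ~ (forall n : int, (1%:M : 'M[F]_(cdim (fcol V) n)) = 0) /\
  forall f : forall n : int, 'M[F]_(cdim (fcol V) n), fmorph f ->
    ~ end_invertible f -> end_invertible (fun n => 1%:M - f n).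

Definition krull_schmidt : Prop :=
  (forall V : fcplx, is_fcplx V ->
     exists s : seq fcplx,
       (forall i : nat, (i < size s)%N ->
          is_fcplx (nth fzero s i) /\ indecomposable (nth fzero s i)) /\
       fiso V (fdsum_seq s)) /\
  (forall V : fcplx, is_fcplx V -> indecomposable V -> local_end V).

Definition basic (V : fcplx) : Prop :=
  exists n : int, ciso (fcol V) (cJ n) \/ ciso (fcol V) (cK n).

End Defs.

From HB Require Import structures.
From mathcomp Require Import all_boot all_order all_algebra.
From mathcomp Require Import zify.
From Stdlib Require Import Classical.
Set Implicit Arguments. Unset Strict Implicit. Unset Printing Implicit Defensive.
Import Order.TTheory GRing.Theory Num.Theory.
Local Open Scope ring_scope.

(* Every nonzero filtered complex V has a filtered idempotent endomorphism e
   whose image is basic.  If some differential d_t is nonzero, pick u of degree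
   t in the first filtration step on which d_t does not vanish, with w = u d_t
   nonzero, and a linear form a vanishing on the filtration step just below the
   one where w enters, with w a = 1; the null-homotopic map e = d h + h d for
   h = a u is a filtered idempotent with image span(u, w), a copy of K.  If all
   differentials vanish, project onto a vector in the first nonzero filtration
   step of some degree, giving a copy of J.  Then V = im e + im (1 - e): by
   induction on dimension every object is a sum of basic ones, an indecomposable
   object must equal im e, and since every endomorphism of a basic object is a
   scalar its endomorphism ring is local.  Basic objects are indecomposable by
   counting dimensions and comparing differentials. *)

Section MatrixFacts.
Variable F : fieldType.

Lemma mx_dim0_eq m n (A B : 'M[F]_(m, n)) : m = 0%N \/ n = 0%N -> A = B.
Proof.
move=> h; apply/matrixP => i j; case: h => h.
  by have := ltn_ord i; rewrite [X in (_ < X)%N]h.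
by have := ltn_ord j; rewrite [X in (_ < X)%N]h.
Qed.

(* The dimensions below are only propositionally equal to 1, so the unique
   entry of such a matrix is read off as the sum of all its entries. *)
Definition mx_entries_sum m n (A : 'M[F]_(m, n)) := \sum_i \sum_j A i j.

Lemma mx11_constE m n (A : 'M[F]_(m, n)) :
  m = 1%N -> n = 1%N -> A = const_mx (mx_entries_sum A).
Proof.
move=> hm hn; rewrite /mx_entries_sum; move: A; rewrite hm hn => A.
by apply/matrixP => i j; rewrite !mxE !big_ord1 !ord1.
Qed.

Lemma mx11_scalarE n (A : 'M[F]_n) : n = 1%N -> A = (mx_entries_sum A)%:M.
Proof.
move=> hn; rewrite /mx_entries_sum; move: A; rewrite hn => A.
by apply/matrixP => i j; rewrite !mxE !big_ord1 !ord1 eqxx mulr1n.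
Qed.

Lemma const_mx11_mul m n p (x y : F) : m = 1%N -> n = 1%N -> p = 1%N ->
  (const_mx x : 'M_(m, n)) *m (const_mx y : 'M_(n, p)) = const_mx (x * y).
Proof.
move=> -> -> ->; apply/matrixP => i j.
by rewrite !mxE big_ord1 !mxE.
Qed.

Lemma const_mx11_mul_scalar m n (x y : F) : m = 1%N -> n = 1%N ->
  (const_mx x : 'M_(m, n)) *m (const_mx y : 'M_(n, m)) = (x * y)%:M.
Proof.
move=> -> ->; apply/matrixP => i j.
by rewrite !mxE big_ord1 !mxE !ord1 eqxx mulr1n.
Qed.

Lemma const_mx1_neq0 m n : (0 < m)%N -> (0 < n)%N -> (const_mx 1 : 'M[F]_(m, n)) != 0.
Proof.
move=> hm hn; apply/eqP => /matrixP /(_ (Ordinal hm) (Ordinal hn)).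
by rewrite !mxE => /eqP; rewrite oner_eq0.
Qed.

Lemma scalar_mx1_neq0 n : (0 < n)%N -> (1%:M : 'M[F]_n) != 0.
Proof.
move=> hn; apply/eqP => /matrixP /(_ (Ordinal hn) (Ordinal hn)).
by rewrite !mxE eqxx mulr1n => /eqP; rewrite oner_eq0.
Qed.

Lemma mx_inv_dim m n (A : 'M[F]_(m, n)) (B : 'M[F]_(n, m)) :
  A *m B = 1%:M -> B *m A = 1%:M -> m = n.
Proof.
move=> AB BA; apply/eqP; rewrite eqn_leq.
have := mxrankM_maxl A B; have := mxrankM_maxl B A.
rewrite AB BA !mxrank1 => hn hm.
by rewrite (leq_trans hm (rank_leq_col _)) (leq_trans hn (rank_leq_col _)).
Qed.

Lemma submx_mul0 m1 m2 n p (A : 'M[F]_(m1, n)) (B : 'M[F]_(m2, n)) (C : 'M[F]_(n, p)) :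
  (A <= B)%MS -> B *m C = 0 -> A *m C = 0.
Proof. by move=> /submxP [D ->] h; rewrite -mulmxA h mulmx0. Qed.

Lemma diag_block_submx m1 m2 m3 m4 n1 n2 (A : 'M[F]_(m1, n1)) (A' : 'M[F]_(m3, n1))
  (B : 'M[F]_(m2, n2)) (B' : 'M[F]_(m4, n2)) :
  (A <= A')%MS -> (B <= B')%MS -> (block_mx A 0 0 B <= block_mx A' 0 0 B')%MS.
Proof.
move=> /submxP [D ->] /submxP [E ->].
apply/submxP; exists (block_mx D 0 0 E).
by rewrite mulmx_block !mulmx0 !mul0mx !addr0 !add0r.
Qed.

Lemma row_mx_sub_diag_block m n1 n2 (A : 'M[F]_(m, n1)) (B : 'M[F]_(m, n2)) :
  (row_mx A B <= block_mx A 0 0 B)%MS.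
Proof.
apply/submxP; exists (row_mx 1%:M 1%:M).
by rewrite mul_row_block !mul1mx !addr0 !add0r.
Qed.

Lemma mulmx_row_neq0 m n p (A : 'M[F]_(m, n)) (B : 'M[F]_(n, p)) :
  A *m B != 0 -> exists i, row i A *m B != 0.
Proof.
case: (pickP (fun i => row i A *m B != 0)) => [i hi _ | h]; first by exists i.
case/eqP; apply/row_matrixP => i.
by rewrite row_mul row0; apply/eqP; move/negbFE: (h i).
Qed.

Lemma separating_form n m (u : 'rV[F]_n) (U : 'M[F]_(m, n)) :
  ~~ (u <= U)%MS -> exists a : 'cV[F]_n, U *m a = 0 /\ u *m a = 1%:M.
Proof.
rewrite submxE; move: (cokermx U) (mulmx_coker U) => K UK uK.
have [j hj] : exists j, (u *m K) 0 j != 0.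
  case: (pickP (fun j => (u *m K) 0 j != 0)) => [j hj | h]; first by exists j.
  case/eqP: uK; apply/matrixP => i j; rewrite ord1 [RHS]mxE; apply/eqP/negbFE; exact: h.
exists (((u *m K) 0 j)^-1 *: (K *m delta_mx j 0)); split.
  by rewrite -scalemxAr mulmxA UK mul0mx scaler0.
rewrite -scalemxAr mulmxA -colE; move: (u *m K) hj => X hX.
by apply/matrixP => a b; rewrite !ord1 !mxE eqxx mulr1n mulVf.
Qed.

Lemma mxrank_rank_one_idem n (a : 'cV[F]_n) (u : 'rV[F]_n) :
  u != 0 -> u *m a *m u = u -> \rank (a *m u) = 1%N.
Proof.
move=> u0 uau; apply/eqP; rewrite eqn_leq; apply/andP; split.
  exact: leq_trans (mxrankM_maxr _ _) (rank_leq_row _).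
have : (u <= a *m u)%MS by rewrite -{1}uau -mulmxA submxMl.
by move/mxrankS; apply: leq_trans; rewrite lt0n mxrank_eq0.
Qed.

End MatrixFacts.

Definition point_fam (T : int -> Type) (a : int) (x : T a) (d : forall k, T k) :
    forall k, T k :=
  fun k => match @eqP _ a k with ReflectT h => eq_rect a T x k h | ReflectF _ => d k end.

Lemma point_famE T a x d : @point_fam T a x d a = x.
Proof. by rewrite /point_fam; case: eqP => // h; rewrite (eq_irrelevance h erefl). Qed.

Lemma point_fam_neq T a x d k : k != a -> @point_fam T a x d k = d k.
Proof. by move=> ka; rewrite /point_fam; case: eqP => // h; rewrite h eqxx in ka. Qed.

Lemma exists_int_step (Q : pred int) (a b : int) : a <= b -> ~~ Q a -> Q b ->
  exists q, Q q && ~~ Q (q - 1).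
Proof.
move=> ab; have [k ->] : exists k : nat, b = a + k%:Z by exists (absz (b - a)); lia.
elim: k => [|k IH] Qa Qb; first by move: Qb; rewrite (_ : a + 0%:Z = a) ?(negbTE Qa) //; lia.
case Qk: (Q (a + k%:Z)); first exact: IH.
by exists (a + k.+1%:Z); rewrite Qb (_ : a + k.+1%:Z - 1 = a + k%:Z) ?Qk //; lia.
Qed.

(* [E = im_proj E *m im_emb E] factors [E] through a basis of its row space.
   Locked, so that rewriting with [mulmxA] cannot unfold [row_base]. *)
HB.lock Definition im_emb (F : fieldType) n (E : 'M[F]_n) := row_base E.
HB.lock Definition im_proj (F : fieldType) n (E : 'M[F]_n) := E *m pinvmx (row_base E).

Section IdempotentImage.
Variable F : fieldType.

Definition im_restrict m n (E1 : 'M[F]_m) (E2 : 'M[F]_n) (D : 'M[F]_(m, n)) :=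
  im_emb E1 *m D *m im_proj E2.

Lemma im_proj_emb n (E : 'M[F]_n) : im_proj E *m im_emb E = E.
Proof. by rewrite im_proj.unlock im_emb.unlock mulmxKpV // eq_row_base. Qed.

Section Idempotent.
Variables (n : nat) (E : 'M[F]_n).
Hypothesis E_idem : E *m E = E.

Lemma im_emb_idem : im_emb E *m E = im_emb E.
Proof.
have : (im_emb E <= E)%MS by rewrite im_emb.unlock eq_row_base.
by case/submxP => D ->; rewrite -mulmxA E_idem.
Qed.

Lemma im_emb_proj : im_emb E *m im_proj E = 1%:M.
Proof.
rewrite im_proj.unlock mulmxA im_emb_idem im_emb.unlock.
by apply: (row_free_inj (row_base_free E)); rewrite mul1mx mulmxKpV.
Qed.

Lemma idem_im_proj : E *m im_proj E = im_proj E.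
Proof. by rewrite im_proj.unlock mulmxA E_idem. Qed.

Lemma im_emb_proj_orth (E' : 'M[F]_n) : E *m E' = 0 -> im_emb E *m im_proj E' = 0.
Proof. by move=> h; rewrite -im_emb_idem im_proj.unlock mulmxA -(mulmxA _ E) h mulmx0 mul0mx. Qed.

Lemma idem_compl : (1%:M - E) *m (1%:M - E) = 1%:M - E.
Proof. by rewrite mulmxBl !mulmxBr !mul1mx !mulmx1 E_idem subrr subr0. Qed.

Lemma idem_compl_orth : E *m (1%:M - E) = 0 /\ (1%:M - E) *m E = 0.
Proof. by rewrite mulmxBr mulmxBl mulmx1 mul1mx E_idem subrr. Qed.

End Idempotent.

Section Intertwined.
Variables (m n : nat) (E1 : 'M[F]_m) (E2 : 'M[F]_n) (D : 'M[F]_(m, n)).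
Hypotheses (E1_idem : E1 *m E1 = E1) (E2_idem : E2 *m E2 = E2).
Hypothesis DE : D *m E2 = E1 *m D.

Lemma im_proj_restrict : im_proj E1 *m im_restrict E1 E2 D = D *m im_proj E2.
Proof. by rewrite /im_restrict !mulmxA im_proj_emb // -DE -mulmxA idem_im_proj. Qed.

Lemma im_restrict_emb : im_restrict E1 E2 D *m im_emb E2 = im_emb E1 *m D.
Proof. by rewrite /im_restrict -mulmxA im_proj_emb // -mulmxA DE mulmxA im_emb_idem. Qed.

End Intertwined.

End IdempotentImage.

Section FilteredIso.
Variable F : fieldType.
Implicit Types U V W A B : fcplx F.

Lemma fiso_trans U V W : fiso U V -> fiso V W -> fiso U W.
Proof.
move=> [f1 [g1 [[c1 m1] [c1' m1'] fg1 gf1]]] [f2 [g2 [[c2 m2] [c2' m2'] fg2 gf2]]].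
exists (fun n => f1 n *m f2 n), (fun n => g2 n *m g1 n); split.
- split=> [n|p n]; first by rewrite mulmxA c1 -!mulmxA c2.
  by rewrite mulmxA (submx_trans (submxMr _ (m1 p n))).
- split=> [n|p n]; first by rewrite mulmxA c2' -!mulmxA c1'.
  by rewrite mulmxA (submx_trans (submxMr _ (m2' p n))).
- by move=> n; rewrite mulmxA -(mulmxA (f1 n)) fg2 mulmx1 fg1.
- by move=> n; rewrite mulmxA -(mulmxA (g2 n)) gf1 mulmx1 gf2.
Qed.

Lemma fiso_dsumr A B B' : fiso B B' -> fiso (fdsum A B) (fdsum A B').
Proof.
move=> [f [g [[c m] [c' m'] fg gf]]].
exists (fun n => block_mx 1%:M 0 0 (f n)), (fun n => block_mx 1%:M 0 0 (g n)).
split=> [||n|n]; rewrite ?mulmx_block ?mulmx0 ?mul0mx ?mulmx1 ?mul1mx ?addr0 ?add0r.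
- split=> [n|p n] /=; rewrite !mulmx_block !mulmx0 !mul0mx !mulmx1 ?mul1mx !addr0 !add0r.
    by rewrite c.
  exact: diag_block_submx.
- split=> [n|p n] /=; rewrite !mulmx_block !mulmx0 !mul0mx !mulmx1 ?mul1mx !addr0 !add0r.
    by rewrite c'.
  exact: diag_block_submx.
- by rewrite fg -scalar_mx_block.
- by rewrite gf -scalar_mx_block.
Qed.

Lemma fiso_dim V W : fiso V W -> forall n, cdim (fcol V) n = cdim (fcol W) n.
Proof. by move=> [f [g [_ _ fg gf]]] n; exact: mx_inv_dim (fg n) (gf n). Qed.

Lemma nonzero_objP V : nonzero_obj V <-> exists m, (0 < cdim (fcol V) m)%N.
Proof.
split=> [nzV | [m hm] V0]; last by move: hm; rewrite (fiso_dim V0).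
apply: NNPP => hV; apply: nzV.
have V0 m : cdim (fcol V) m = 0%N.
  by apply/eqP; rewrite -leqn0 leqNgt; apply/negP => hm; apply: hV; exists m.
exists (fun _ => 0), (fun _ => 0).
split=> [||n|n]; try by apply: mx_dim0_eq; left.
- by split=> [n|p n]; [apply: mx_dim0_eq; left | rewrite mulmx0 sub0mx].
- by split=> [n|p n]; [apply: mx_dim0_eq; right | rewrite mulmx0 sub0mx].
Qed.

End FilteredIso.

Section Image.
Variables (F : fieldType) (V : fcplx F) (e : forall n, 'M[F]_(cdim (fcol V) n)).
Hypotheses (e_fmorph : fmorph e) (e_idem : forall n, e n *m e n = e n).

Definition fimage := @FCplx F
  (@Cplx F (fun n => \rank (e n)) (fun n => im_restrict (e n) (e (n - 1)) (cdif (fcol V) n)))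
  (fun p n => (<< ffil V p n *m im_proj (e n) >>)%MS).

Let e_chain n := proj1 e_fmorph n.

Lemma fimage_is_fcplx : is_fcplx V -> is_fcplx fimage.
Proof.
move=> [[dd0 [N hN]] Fd Fmon [P hP]].
split=> [|p n /=|p n /=|].
- split=> [n /=|]; last first.
    by exists N => n hn; apply/eqP; rewrite -leqn0 -(hN n hn) rank_leq_row.
  rewrite {2}/im_restrict !mulmxA im_restrict_emb ?e_idem ?e_chain //.
  by rewrite -(mulmxA _ (cdif _ n)) dd0 mulmx0 !mul0mx.
- rewrite (eqmxMr _ (genmxE _)) genmxE -mulmxA.
  by rewrite im_proj_restrict ?e_idem ?e_chain // mulmxA submxMr.
- by rewrite !genmxE submxMr.
- exists P => p n; have [P0 P1] := hP p n; split=> /= hp.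
    by rewrite P0 // mul0mx genmx0.
  rewrite genmxE -(im_emb_proj (e_idem n)) submxMr //.
  exact: submx_trans (submx1 _) (P1 hp).
Qed.

End Image.

Definition fcompl (F : fieldType) (V : fcplx F) (e : forall n, 'M[F]_(cdim (fcol V) n)) :
  forall n, 'M[F]_(cdim (fcol V) n) := fun n => 1%:M - e n.

Section Splitting.
Variables (F : fieldType) (V : fcplx F) (e : forall n, 'M[F]_(cdim (fcol V) n)).
Hypotheses (e_fmorph : fmorph e) (e_idem : forall n, e n *m e n = e n).

Lemma fcompl_fmorph : fmorph (fcompl e).
Proof.
case: e_fmorph => e_chain e_fil; split=> [n|p n].
  by rewrite /fcompl mulmxBr mulmxBl mulmx1 mul1mx e_chain.
by rewrite /fcompl mulmxBr mulmx1 addmx_sub // eqmx_opp.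
Qed.

Lemma fcompl_idem n : fcompl e n *m fcompl e n = fcompl e n.
Proof. exact: idem_compl. Qed.

Lemma fiso_image_split : fiso V (fdsum (fimage e) (fimage (fcompl e))).
Proof.
have [e_chain e_fil] := e_fmorph; have [c_chain c_fil] := fcompl_fmorph.
have c_idem := fcompl_idem.
exists (fun n => row_mx (im_proj (e n)) (im_proj (fcompl e n))),
       (fun n => col_mx (im_emb (e n)) (im_emb (fcompl e n))).
split=> [||n|n].
- split=> [n|p n] /=.
    rewrite mul_mx_row mul_row_block !mulmx0 addr0 add0r.
    by rewrite !im_proj_restrict.
  rewrite mul_mx_row; apply: submx_trans (row_mx_sub_diag_block _ _) _.
  by apply: diag_block_submx; rewrite genmxE.
- split=> [n|p n] /=.
    rewrite mul_block_col mul_col_mx !mul0mx addr0 add0r.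
    by rewrite !im_restrict_emb.
  rewrite mul_block_col !mul0mx addr0 add0r col_mx_sub.
  rewrite !(eqmxMr _ (genmxE _)) -!mulmxA !im_proj_emb //.
  by rewrite e_fil c_fil.
- by rewrite mul_row_col !im_proj_emb // /fcompl addrC subrK.
- have [ec ce] := idem_compl_orth (e_idem n).
  rewrite mul_col_row !im_emb_proj // (im_emb_proj_orth (e_idem n) ec).
  by rewrite (im_emb_proj_orth (c_idem n) ce) -scalar_mx_block.
Qed.

End Splitting.

Section Shapes.
Variable F : fieldType.
Implicit Types (C : cplx F) (V A B : fcplx F).

Definition J_shaped C (t : int) := forall m, cdim C m = nat_of_bool (m == t).
Definition K_shaped C (t : int) :=
  (forall m, cdim C m = nat_of_bool ((m == t - 1) || (m == t))) /\ cdif C t != 0.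
Definition shaped V := exists t, J_shaped (fcol V) t \/ K_shaped (fcol V) t.

Lemma J_shaped_dim0 C D t m : J_shaped C t -> J_shaped D t ->
  cdim C m = 0%N \/ cdim D (m - 1) = 0%N.
Proof. by move=> -> ->; case: eqP => [->|]; [right; case: eqP => //; lia | left]. Qed.

Lemma J_shaped_ciso C t : J_shaped C t -> ciso C (cJ F t).
Proof.
move=> hC; have hJ : J_shaped (cJ F t) t by move=> m /=; case: (m == t).
exists (fun m => const_mx 1), (fun m => const_mx 1).
split=> m; try by apply: mx_dim0_eq; apply: J_shaped_dim0.
- case: (eqVneq m t) => [->|mt]; first by rewrite const_mx11_mul_scalar ?hC ?hJ ?eqxx ?mulr1.
  by apply: mx_dim0_eq; left; rewrite hC (negbTE mt).
- case: (eqVneq m t) => [->|mt]; first by rewrite const_mx11_mul_scalar ?hC ?hJ ?eqxx ?mulr1.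
  by apply: mx_dim0_eq; left; rewrite hJ (negbTE mt).
Qed.

Lemma K_shaped_ciso C t : K_shaped C t -> ciso C (cK F (t - 1)).
Proof.
move=> [hC dt0].
have hK m : cdim (cK F (t - 1)) m = nat_of_bool ((m == t - 1) || (m == t)).
  by rewrite /= subrK; case: ifP.
have [C1 C0] : cdim C t = 1%N /\ cdim C (t - 1) = 1%N by rewrite !hC !eqxx orbT.
have [K1 K0] : cdim (cK F (t - 1)) t = 1%N /\ cdim (cK F (t - 1)) (t - 1) = 1%N.
  by rewrite !hK !eqxx orbT.
have t1t : t - 1 != t by apply/eqP; lia.
have hout m : m != t -> m != t - 1 ->
    cdim C m = 0%N /\ cdim (cK F (t - 1)) m = 0%N.
  by move=> /negbTE mt /negbTE mt1; rewrite hC hK mt mt1.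
have hlow C' : (forall m, cdim C' m = nat_of_bool ((m == t - 1) || (m == t))) ->
    cdim C' (t - 1 - 1) = 0%N.
  by move=> ->; case: eqP; case: eqP => //; lia.
set c := mx_entries_sum (cdif C t).
have dtE : cdif C t = const_mx c by apply: mx11_constE.
have c0 : c != 0.
  by apply: contra dt0 => /eqP c0; rewrite dtE c0; apply/eqP/matrixP => i j; rewrite !mxE.
(* the scaling at degree [t] absorbs the constant of the differential *)
exists (fun m => const_mx (if m == t then c else 1)),
       (fun m => const_mx (if m == t then c^-1 else 1)).
split=> m; case: (eqVneq m t) => [->|mt].
- by rewrite dtE !const_mx11_mul // (negbTE t1t).
- case: (eqVneq m (t - 1)) => [->|mt1]; apply: mx_dim0_eq.
    by right; apply: hlow.
  by left; have [] := hout m mt mt1.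
- by rewrite dtE !const_mx11_mul // (negbTE t1t) mulVf // mulr1.
- case: (eqVneq m (t - 1)) => [->|mt1]; apply: mx_dim0_eq.
    by right; apply: hlow.
  by left; have [] := hout m mt mt1.
- by rewrite const_mx11_mul_scalar // mulfV.
- case: (eqVneq m (t - 1)) => [->|mt1].
    by rewrite const_mx11_mul_scalar // ?(negbTE t1t) ?mulr1.
  by apply: mx_dim0_eq; left; have [] := hout m mt mt1.
- by rewrite const_mx11_mul_scalar // mulVf.
- case: (eqVneq m (t - 1)) => [->|mt1].
    by rewrite const_mx11_mul_scalar // ?(negbTE t1t) ?mulr1.
  by apply: mx_dim0_eq; left; have [] := hout m mt mt1.
Qed.

Lemma shaped_basic V : shaped V -> basic V.
Proof.
move=> [t [hJ|hK]]; first by exists t; left; apply: J_shaped_ciso.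
by exists (t - 1); right; apply: K_shaped_ciso.
Qed.

Lemma basic_shaped V : basic V -> shaped V.
Proof.
move=> [n [[f [g [_ _ fg gf]]] | [f [g [f_chain _ fg gf]]]]].
  by exists n; left => m; rewrite (mx_inv_dim (fg m) (gf m)) /=; case: (m == n).
exists (n + 1); right; split.
  by move=> m; rewrite (mx_inv_dim (fg m) (gf m)) /= addrK; case: ifP.
apply/eqP => d0; have := f_chain (n + 1); rewrite d0 mul0mx.
move/(congr1 (mulmx (g (n + 1)))); rewrite mulmx0 mulmxA gf mul1mx => /esym/eqP.
by apply/negP; apply: const_mx1_neq0; rewrite /= ?addrK eqxx ?orbT.
Qed.

Lemma fiso_dsum_cdif0 V A B t : fiso V (fdsum A B) ->
  cdif (fcol A) t = 0 -> cdif (fcol B) t = 0 -> cdif (fcol V) t = 0.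
Proof.
move=> [f [g [[f_chain _] _ fg _]]] dA dB.
have := f_chain t; rewrite /= dA dB block_mx0 mulmx0 => df0.
by rewrite -[cdif _ t]mulmx1 -(fg (t - 1)) mulmxA df0 mul0mx.
Qed.

Lemma shaped_indecomposable V : shaped V -> indecomposable V.
Proof.
move=> [t shV]; split.
  by apply/nonzero_objP; exists t; case: shV => [hV|[hV _]]; rewrite hV eqxx ?orbT.
move=> A B _ _ /nonzero_objP [a Aa] /nonzero_objP [b Bb] VAB.
have dimAB m : (cdim (fcol A) m + cdim (fcol B) m)%N = cdim (fcol V) m.
  by rewrite (fiso_dim VAB m).
case: shV => [hV | [hV dt0]].
  have supp m : (0 < cdim (fcol A) m)%N \/ (0 < cdim (fcol B) m)%N -> m = t.
    move=> hm; case: (eqVneq m t) => // /negbTE mt.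
    by move: (dimAB m); rewrite hV mt /=; lia.
  have ea := supp a (or_introl Aa); have eb := supp b (or_intror Bb); subst a b.
  by move: (dimAB t); rewrite hV eqxx /=; lia.
have supp m : (0 < cdim (fcol A) m)%N \/ (0 < cdim (fcol B) m)%N -> m = t - 1 \/ m = t.
  move=> hm; case: (eqVneq m (t - 1)) => [|/negbTE mt1]; first by left.
  case: (eqVneq m t) => [|/negbTE mt]; first by right.
  by move: (dimAB m); rewrite hV mt1 mt /=; lia.
have := dimAB (t - 1); have := dimAB t; rewrite !hV !eqxx orbT /= => dt dt1.
move/eqP: dt0; apply; apply: (fiso_dsum_cdif0 VAB).
  by apply: mx_dim0_eq; case: (supp b (or_intror Bb)) => eb; subst b; lia.
by apply: mx_dim0_eq; case: (supp a (or_introl Aa)) => ea; subst a; lia.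
Qed.

Lemma shaped_fmorph_scalar V (f : forall n, 'M[F]_(cdim (fcol V) n)) :
  shaped V -> chain_map f -> exists c, forall m, f m = c%:M.
Proof.
move=> [t [hV | [hV dt0]]] f_chain.
  exists (mx_entries_sum (f t)) => m; case: (eqVneq m t) => [->|mt].
    by apply: mx11_scalarE; rewrite hV eqxx.
  by apply: mx_dim0_eq; left; rewrite hV (negbTE mt).
have t1t : t - 1 != t by apply/eqP; lia.
set c1 := mx_entries_sum (f (t - 1)); set c := mx_entries_sum (f t).
have f1E : f (t - 1) = c1%:M by apply: mx11_scalarE; rewrite hV eqxx.
have fE : f t = c%:M by apply: mx11_scalarE; rewrite hV eqxx orbT.
have c1c : c1 = c.
  have := f_chain t; rewrite f1E fE mul_mx_scalar mul_scalar_mx => /eqP.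
  by rewrite -subr_eq0 -scalerBl scalemx_eq0 (negbTE dt0) orbF subr_eq0 => /eqP.
exists c => m; case: (eqVneq m t) => [->|mt] //.
case: (eqVneq m (t - 1)) => [->|mt1]; first by rewrite f1E c1c.
by apply: mx_dim0_eq; left; rewrite hV (negbTE mt) (negbTE mt1).
Qed.

Lemma scalar_end_invertible V (c : F) : c != 0 ->
  end_invertible (fun n : int => (c%:M : 'M[F]_(cdim (fcol V) n))).
Proof.
move=> c0; exists (fun n => c^-1%:M); split.
  by split=> [n|p n]; [rewrite scalar_mxC | rewrite mul_mx_scalar scalemx_sub].
by move=> n; rewrite -!scalar_mxM mulVf ?mulfV.
Qed.

Lemma shaped_local_end V : shaped V -> local_end V.
Proof.
move=> shV; split.
  have [t [hV | [hV _]]] := shV; move/(_ t)/eqP; apply/negP;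
    by apply: scalar_mx1_neq0; rewrite hV eqxx ?orbT.
move=> f [f_chain _] f_ninv; have [c fE] := shaped_fmorph_scalar shV f_chain.
case: (eqVneq c 0) => [c0 | c0]; last first.
  case: f_ninv; have [g [g_fm gf]] := scalar_end_invertible V c0.
  by exists g; split=> // n; rewrite fE.
have [g [g_fm gf]] := @scalar_end_invertible V 1 (oner_neq0 _).
by exists g; split=> // n; rewrite fE c0 raddf0 subr0.
Qed.

End Shapes.

Section RankOneFiltered.
Variables (F : fieldType) (n : nat) (G : int -> 'M[F]_n).
Hypothesis G_mon : forall p q, p <= q -> (G p <= G q)%MS.

Lemma rank_one_filtered (a : 'cV[F]_n) (b : 'rV[F]_n) (s : int) :
  G (s - 1) *m a = 0 -> (b <= G s)%MS -> forall p, (G p *m (a *m b) <= G p)%MS.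
Proof.
move=> Ga0 bG p; case: (ltrP p s) => ps.
  by rewrite mulmxA (submx_mul0 (G_mon (_ : p <= s - 1)) Ga0) ?mul0mx ?sub0mx //; lia.
by rewrite mulmxA; apply: submx_trans (submxMl _ _) (submx_trans bG (G_mon ps)).
Qed.

End RankOneFiltered.

Section NullHomotopicIdempotent.
Variables (F : fieldType) (C : cplx F).
Local Notation d := (cdif C).
Variables (v w : forall k, 'rV[F]_(cdim C k)) (a : forall k, 'cV[F]_(cdim C k)).
Hypothesis dd0 : forall k, d k *m d (k - 1) = 0.
Hypothesis vd : forall k, v k *m d k = w (k - 1).
Hypothesis wd : forall k, w k *m d k = 0.
Hypothesis va : forall k, v k *m a k = 0.
Hypothesis wav : forall k, w (k - 1) *m a (k - 1) *m v k = v k.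
Hypothesis waw : forall k, w k *m a k *m w k = w k.

(* [d h + h d] for the homotopy [h k = a k *m v (k + 1)], with [w k] standing
   for [v (k + 1) *m d (k + 1)] so that no transport along [k + 1 - 1 = k] is
   needed. *)
Definition null_homotopic_fam k := d k *m a (k - 1) *m v k + a k *m w k.

Lemma null_homotopic_chain_map : chain_map null_homotopic_fam.
Proof.
move=> k; rewrite /null_homotopic_fam mulmxDr mulmxDl !mulmxA dd0 !mul0mx add0r.
by rewrite -!mulmxA vd wd mulmx0 addr0.
Qed.

Lemma null_homotopic_idem k :
  null_homotopic_fam k *m null_homotopic_fam k = null_homotopic_fam k.
Proof.
set h := d k *m a (k - 1) *m v k; set g := a k *m w k.
have hh : h *m h = h.
  by rewrite /h -!mulmxA (mulmxA (v k)) vd !mulmxA -(mulmxA _ (w _)) -(mulmxA _ _ (v k)) wav.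
have hg : h *m g = 0 by rewrite /h /g mulmxA -(mulmxA _ (v k)) va mulmx0 mul0mx.
have gh : g *m h = 0 by rewrite /g /h !mulmxA -(mulmxA _ (w k)) wd mulmx0 !mul0mx.
have gg : g *m g = g by rewrite /g mulmxA -(mulmxA _ (w k)) -(mulmxA _ _ (w k)) waw.
by rewrite /null_homotopic_fam -/h -/g mulmxDl !mulmxDr hh hg gh gg addr0 add0r.
Qed.

End NullHomotopicIdempotent.

Section BasicIdempotent.
Variables (F : fieldType) (V : fcplx F).
Local Notation d := (cdif (fcol V)).
Local Notation Fl := (ffil V).

Definition basic_idempotent (e : forall k, 'M[F]_(cdim (fcol V) k)) :=
  [/\ fmorph e, forall m, e m *m e m = e m &
    exists t, (forall m, \rank (e m) = nat_of_bool (m == t)) \/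
      ((forall m, \rank (e m) = nat_of_bool ((m == t - 1) || (m == t))) /\ e t *m d t != 0)].

Lemma basic_idempotent_image_shaped e : basic_idempotent e -> shaped (fimage e).
Proof.
move=> [[e_chain _] e_idem [t [hJ | [hK et0]]]]; exists t; first by left.
right; split=> //=; apply: contra et0 => /eqP de0; apply/eqP.
have := congr1 (mulmx (im_proj (e t))) de0.
rewrite mulmx0 im_proj_restrict // => dp0.
by rewrite -e_chain -(im_proj_emb (e (t - 1))) mulmxA dp0 mul0mx.
Qed.

Lemma basic_idempotent_rank1 e : basic_idempotent e -> exists t, \rank (e t) = 1%N.
Proof. by move=> [_ _ [t [hJ | [hK _]]]]; exists t; rewrite ?hJ ?hK eqxx ?orbT. Qed.

Lemma basic_idempotent1_shaped e :
  basic_idempotent e -> (forall m, e m = 1%:M) -> shaped V.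
Proof.
move=> [_ _ [t [hJ | [hK et0]]]] e1; exists t.
  by left => m; rewrite -hJ e1 mxrank1.
by right; split; [move=> m; rewrite -hK e1 mxrank1 | rewrite e1 mul1mx in et0].
Qed.

Hypothesis dd0 : forall n, d n *m d (n - 1) = 0.
Hypothesis Fl_mon1 : forall p n, (Fl p n <= Fl (p + 1) n)%MS.
Variable P : nat.
Hypothesis Fl_bounds : forall p n,
  (p <= - P%:Z -> Fl p n = 0) /\ (P%:Z <= p -> (1%:M <= Fl p n)%MS).

Lemma Fl_mon n p q : p <= q -> (Fl p n <= Fl q n)%MS.
Proof.
move=> pq; have [k ->] : exists k : nat, q = p + k%:Z by exists (absz (q - p)); lia.
elim: k => [|k IH]; first by rewrite (_ : p + 0%:Z = p) //; lia.
by apply: submx_trans IH _; rewrite (_ : p + k.+1%:Z = p + k%:Z + 1) //; lia.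
Qed.

Lemma filtration_step n (u : 'rV[F]_(cdim (fcol V) n)) : u != 0 ->
  exists q, (u <= Fl q n)%MS && ~~ (u <= Fl (q - 1) n)%MS.
Proof.
move=> u0; apply: (@exists_int_step (fun p => u <= Fl p n)%MS (- P%:Z) P%:Z); first lia.
  by rewrite (proj1 (Fl_bounds _ _) (lexx _)) submx0.
exact: submx_trans (submx1 _) (proj2 (Fl_bounds _ _) (lexx _)).
Qed.

Lemma basic_idempotent_of_dif0 t : (forall m, d m = 0) -> (0 < cdim (fcol V) t)%N ->
  exists e, basic_idempotent e.
Proof.
move=> d0 dim_t.
have [q /andP [Fq0 Fq1]] : exists q, (Fl q t != 0) && ~~ (Fl (q - 1) t != 0).
  apply: (@exists_int_step (fun p => Fl p t != 0) (- P%:Z) P%:Z); first lia.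
    by rewrite (proj1 (Fl_bounds _ t) (lexx _)) eqxx.
  apply: contraTneq (proj2 (Fl_bounds P%:Z t) (lexx _)) => ->.
  by rewrite submx0 scalar_mx1_neq0.
move: Fq0; rewrite -[Fl q t]mulmx1 negbK in Fq1 * => /mulmx_row_neq0 [i].
rewrite mulmx1; set u := row i _ => u0.
have [|a [_ ua]] := @separating_form F _ _ u (0 : 'M_(cdim (fcol V) t)); first by rewrite submx0.
pose e := @point_fam (fun k => 'M[F]_(cdim (fcol V) k)) t (a *m u) (fun _ => 0).
have eE k : k != t -> e k = 0 by apply: point_fam_neq.
exists e; split.
- split=> [m|p k]; first by rewrite !d0 mul0mx mulmx0.
  case: (eqVneq k t) => [->|kt]; last by rewrite eE // mulmx0 sub0mx.
  rewrite /e point_famE; apply: (rank_one_filtered (@Fl_mon t) (s := q)).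
    by rewrite (eqP Fq1) mul0mx.
  by rewrite (submx_trans (row_sub _ _)) // mulmx1.
- move=> k; case: (eqVneq k t) => [->|kt]; last by rewrite eE // mulmx0.
  by rewrite /e point_famE mulmxA -(mulmxA a) ua mulmx1.
- exists t; left => m; case: (eqVneq m t) => [->|mt]; last by rewrite eE // mxrank0.
  by rewrite /e point_famE mxrank_rank_one_idem // ua mul1mx.
Qed.

Lemma basic_idempotent_of_dif t : d t != 0 -> exists e, basic_idempotent e.
Proof.
move=> dt0.
have [r /andP [Fr0 Fr1]] : exists r, (Fl r t *m d t != 0) && ~~ (Fl (r - 1) t *m d t != 0).
  apply: (@exists_int_step (fun p => Fl p t *m d t != 0) (- P%:Z) P%:Z); first lia.
    by rewrite (proj1 (Fl_bounds _ t) (lexx _)) mul0mx eqxx.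
  apply: contra dt0 => /eqP Fd0; apply/eqP.
  by rewrite -(mul1mx (d t)) (submx_mul0 (proj2 (Fl_bounds P%:Z t) (lexx _)) Fd0).
rewrite negbK in Fr1; have [i] := mulmx_row_neq0 Fr0.
have uF : (row i (Fl r t) <= Fl r t)%MS := row_sub i _.
move: (row i _) uF => u uF; set w := u *m d t => w0.
have [q /andP [wF wF1]] := filtration_step w0.
have [a [Fa0 wa]] := separating_form wF1.
pose u' := @point_fam (fun k => 'rV[F]_(cdim (fcol V) k)) t u (fun _ => 0).
pose w' := @point_fam (fun k => 'rV[F]_(cdim (fcol V) k)) (t - 1) w (fun _ => 0).
pose a' := @point_fam (fun k => 'cV[F]_(cdim (fcol V) k)) (t - 1) a (fun _ => 0).
have [tt1 t1t] : t != t - 1 /\ t - 1 != t by split; apply/eqP; lia.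
have [u'E w'E a'E] : [/\ u' t = u, w' (t - 1) = w & a' (t - 1) = a].
  by rewrite /u' /w' /a' !point_famE.
have u'0 k : k != t -> u' k = 0 by apply: point_fam_neq.
have w'0 k : k != t - 1 -> w' k = 0 by apply: point_fam_neq.
have a'0 k : k != t - 1 -> a' k = 0 by apply: point_fam_neq.
have k1t1 k : k != t -> k - 1 != t - 1 by apply: contraNneq => h; apply/eqP; lia.
have vd k : u' k *m d k = w' (k - 1).
  by case: (eqVneq k t) => [->|kt]; rewrite ?u'E ?w'E // u'0 // w'0 ?mul0mx ?k1t1.
have wd k : w' k *m d k = 0.
  case: (eqVneq k (t - 1)) => [->|kt]; last by rewrite w'0 // mul0mx.
  by rewrite w'E /w -mulmxA dd0 mulmx0.
have va k : u' k *m a' k = 0.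
  by case: (eqVneq k t) => [->|kt]; [rewrite a'0 // mulmx0 | rewrite u'0 // mul0mx].
have wav k : w' (k - 1) *m a' (k - 1) *m u' k = u' k.
  case: (eqVneq k t) => [->|kt]; last by rewrite u'0 // mulmx0.
  by rewrite w'E a'E u'E wa mul1mx.
have waw k : w' k *m a' k *m w' k = w' k.
  case: (eqVneq k (t - 1)) => [->|kt]; last by rewrite w'0 // mulmx0.
  by rewrite w'E a'E wa mul1mx.
pose e := null_homotopic_fam u' w' a'.
have eE k : k != t -> k != t - 1 -> e k = 0.
  by move=> kt kt1; rewrite /e /null_homotopic_fam u'0 // w'0 // !mulmx0 addr0.
have etE : e t = d t *m a *m u.
  by rewrite /e /null_homotopic_fam a'E u'E w'0 // mulmx0 addr0.
have et1E : e (t - 1) = a *m w.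
  by rewrite /e /null_homotopic_fam u'0 // w'E a'E mulmx0 add0r.
have ue : u *m e t = u by rewrite etE !mulmxA -/w wa mul1mx.
exists e; split; first split.
- exact: null_homotopic_chain_map.
- move=> p k; case: (eqVneq k t) => [->|kt].
    rewrite etE; apply: (rank_one_filtered (@Fl_mon t) (s := r)) => //.
    by rewrite mulmxA (eqP Fr1) mul0mx.
  case: (eqVneq k (t - 1)) => [->|kt1]; last by rewrite eE // mulmx0 sub0mx.
  by rewrite et1E; apply: (rank_one_filtered (@Fl_mon (t - 1)) (s := q)).
- exact: null_homotopic_idem.
- exists t; right; split; last by apply: contra w0 => /eqP ed0; rewrite /w -ue -mulmxA ed0 mulmx0.
  move=> m; case: (eqVneq m t) => [->|mt].
    have u0 : u != 0 by apply: contra w0 => /eqP u0; rewrite /w u0 mul0mx.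
    by rewrite etE orbT mxrank_rank_one_idem // mulmxA -/w wa mul1mx.
  case: (eqVneq m (t - 1)) => [->|mt1]; last by rewrite eE // mxrank0.
  by rewrite et1E mxrank_rank_one_idem // wa mul1mx.
Qed.

End BasicIdempotent.

Section Decomposition.
Variable F : fieldType.
Implicit Types V : fcplx F.

Lemma basic_idempotent_exists V : is_fcplx V -> nonzero_obj V ->
  exists e : forall m, 'M[F]_(cdim (fcol V) m), basic_idempotent e.
Proof.
move=> [[dd0 _] _ Fl_mon1 [P Fl_bounds]] /nonzero_objP [m dim_m].
case: (classic (exists t, cdif (fcol V) t != 0)) => [[t dt0] | no_dif].
  exact: (basic_idempotent_of_dif dd0 Fl_mon1 Fl_bounds dt0).
apply: (basic_idempotent_of_dif0 Fl_mon1 Fl_bounds _ dim_m) => n.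
by apply/eqP; apply: contra_notT no_dif => dn0; exists n.
Qed.

Lemma indecomposable_shaped V : is_fcplx V -> indecomposable V -> shaped V.
Proof.
move=> fV [nzV indecV]; have [e e_basic] := basic_idempotent_exists fV nzV.
have [e_fmorph e_idem _] := e_basic.
have compl0 : ~ nonzero_obj (fimage (fcompl e)).
  move=> nzC; apply: (indecV _ _ (fimage_is_fcplx e_fmorph e_idem fV)
    (fimage_is_fcplx (fcompl_fmorph e_fmorph) (fcompl_idem e_idem) fV)) => //.
    by apply/nonzero_objP; have [t et] := basic_idempotent_rank1 e_basic; exists t; rewrite /= et.
  exact: fiso_image_split.
apply: (basic_idempotent1_shaped e_basic) => m.
apply/eqP; rewrite eq_sym -subr_eq0 -mxrank_eq0; apply/eqP.
by apply/eqP; rewrite -leqn0 leqNgt; apply/negP => cm; apply: compl0; apply/nonzero_objP; exists m.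
Qed.

Definition total_dim (N : nat) V := (\sum_(i < (2 * N).+1) cdim (fcol V) (i%:Z - N%:Z))%N.

Lemma total_dim_ge N V t : `|t| <= N%:Z -> (cdim (fcol V) t <= total_dim N V)%N.
Proof.
move=> tN; have ti : (absz (t + N%:Z)%R < (2 * N).+1)%N by lia.
rewrite /total_dim (bigD1 (Ordinal ti)) //=.
by rewrite (_ : (absz (t + N%:Z))%:Z - N%:Z = t) ?leq_addr //; lia.
Qed.

Lemma total_dim_fiso_dsum N V A B :
  fiso V (fdsum A B) -> (total_dim N A + total_dim N B)%N = total_dim N V.
Proof.
by move=> VAB; rewrite /total_dim -big_split; apply: eq_bigr => i _; rewrite (fiso_dim VAB).
Qed.

Lemma split_off_basic V : is_fcplx V -> nonzero_obj V ->
  exists B W, [/\ is_fcplx B, indecomposable B, is_fcplx W & fiso V (fdsum B W)].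
Proof.
move=> fV nzV; have [e e_basic] := basic_idempotent_exists fV nzV.
have [e_fmorph e_idem _] := e_basic.
exists (fimage e), (fimage (fcompl e)); split.
- exact: fimage_is_fcplx.
- exact/shaped_indecomposable/basic_idempotent_image_shaped.
- exact: fimage_is_fcplx (fcompl_fmorph _) (fcompl_idem _) fV.
- exact: fiso_image_split.
Qed.

Definition indec_decomposition V := exists s : seq (fcplx F),
  (forall i : nat, (i < size s)%N ->
     is_fcplx (nth (fzero F) s i) /\ indecomposable (nth (fzero F) s i)) /\
  fiso V (fdsum_seq s).

Lemma indec_decomposition_exists N k V : is_fcplx V ->
  (forall m, N%:Z < `|m| -> cdim (fcol V) m = 0%N) -> (total_dim N V < k)%N ->
  indec_decomposition V.
Proof.
elim: k V => // k IH V fV V_supp V_dim.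
case: (classic (nonzero_obj V)) => [nzV | zV]; last by exists [::]; split=> //; apply: NNPP.
have [B [W [fB indB fW VBW]]] := split_off_basic fV nzV.
have dimBW m : (cdim (fcol B) m + cdim (fcol W) m)%N = cdim (fcol V) m by rewrite (fiso_dim VBW).
have [t Bt] := proj1 (nonzero_objP B) (proj1 indB).
have tN : `|t| <= N%:Z by rewrite leNgt; apply/negP => /V_supp; rewrite -dimBW; lia.
have := total_dim_ge B tN; have := total_dim_fiso_dsum N VBW => sumBW Bpos.
have [s [s_indec Ws]] : indec_decomposition W.
  by apply: IH => // [m /V_supp|]; rewrite -?dimBW; lia.
exists (B :: s); split; last exact: fiso_trans VBW (fiso_dsumr _ Ws).
by case=> [|i] /= si; [split | apply: s_indec].
Qed.

End Decomposition.

Theorem theorem1p6 (F : fieldType) :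
  krull_schmidt F /\
  (forall V : fcplx F, is_fcplx V -> (indecomposable V <-> basic V)).
Proof.
split; first split.
- move=> V fV; have [[_ [N V_supp]] _ _ _] := fV.
  exact: indec_decomposition_exists V_supp (ltnSn _).
- by move=> V fV /(indecomposable_shaped fV) /shaped_local_end.
- move=> V fV; split; first by move/(indecomposable_shaped fV)/shaped_basic.
  by move/basic_shaped/shaped_indecomposable.
Qed.
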